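(* Let $L$ be a polyhedron and $G$ a simplicial group. Then for every $V\in\mathbb Z[G(L)]$ we have $\theta(V)\le\eta(V)$.
   Context: A polyhedron $L$ is a finite simplicial complex of affine simplices in $\mathbb R^\infty$ with a linear order on the vertices of each simplex, compatible with faces; $\hat L$ is the simplicial set obtained by adding degenerate simplices. For a simplicial set $E$, $E(L)$ is the set of simplicial maps $\hat L\to E$; for $y\in L$, $\bar{\bar y}$ is the subpolyhedron of $y$ and its faces. For $T\subset L$ put $E_T=\prod_{y\in T}E(\bar{\bar y})$ and $v\|_T=(v|_{\bar{\bar y}})_{y\in T}$, extended additively to $\mathbb Z[E(L)]\to\mathbb Z[E_T]$ (free abelian groups on these sets). For $V\in\mathbb Z[E(L)]$, $\theta(V)=\inf\{\#T: T\subset L,\ V\|_T\neq0\}\in\mathbb N\cup\{\infty\}$. For a simplicial group $G$, $G(L)$ and $G_L=\prod_{y\in L}G(\bar{\bar y})$ are groups, $\mathbb Z H$ denotes a group ring with augmentation ideal $\Delta(H)$ ($\Delta(H)^0=\mathbb ZH$), and $\eta(V)=\sup\{s\in\mathbb N: V\|_L\in\Delta(G_L)^s\}$. *)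

From HB Require Import structures.
From mathcomp Require Import all_boot ssralg ssrint monoid.
From mathcomp Require Import boolp.
From mathcomp.multinomials Require Import freeg.

Set Implicit Arguments.
Unset Strict Implicit.
Unset Printing Implicit Defensive.

(* The simplex category Delta: morphisms [m] -> [n] are nondecreasing  *)
(* maps 'I_m.+1 -> 'I_n.+1.                                            *)
Definition Dmor (m n : nat) :=
  {f : {ffun 'I_m.+1 -> 'I_n.+1} |
   [forall i : 'I_m.+1, forall j : 'I_m.+1, (i <= j)%N ==> (f i <= f j)%N]}.

Lemma did_mono n :
  [forall i : 'I_n.+1, forall j : 'I_n.+1, (i <= j)%N ==> ([ffun k : 'I_n.+1 => k] i <= [ffun k : 'I_n.+1 => k] j)%N].
Proof. by apply/forallP => i; apply/forallP => j; rewrite !ffunE; apply/implyP. Qed.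

Definition did (n : nat) : Dmor n n :=
  @exist {ffun 'I_n.+1 -> 'I_n.+1} _ [ffun k : 'I_n.+1 => k] (did_mono n).

Lemma dcomp_mono m n p (g : Dmor n p) (f : Dmor m n) :
  [forall i : 'I_m.+1, forall j : 'I_m.+1, (i <= j)%N ==>
     ([ffun k => val g (val f k)] i <= [ffun k => val g (val f k)] j)%N].
Proof.
apply/forallP => i; apply/forallP => j; rewrite !ffunE; apply/implyP => hij.
have /forallP /(_ i) /forallP /(_ j) /implyP hf := valP f.
have /forallP /(_ (val f i)) /forallP /(_ (val f j)) /implyP hg := valP g.
exact: hg (hf hij).
Qed.

Definition dcomp m n p (g : Dmor n p) (f : Dmor m n) : Dmor m p :=
  @exist {ffun 'I_m.+1 -> 'I_p.+1} _ [ffun k => val g (val f k)] (dcomp_mono g f).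

Record sSet := SSet {
  sob :> nat -> Type;
  sact : forall m n, Dmor m n -> sob n -> sob m;
  sact_id : forall n (x : sob n), sact (did n) x = x;
  sact_comp : forall m n p (f : Dmor m n) (g : Dmor n p) (x : sob p),
      sact (dcomp g f) x = sact f (sact g x) }.

Record sGroup := SGroup {
  sgob : nat -> groupType;
  sgact : forall m n, Dmor m n -> sgob n -> sgob m;
  sgact_id : forall n (x : sgob n), sgact (did n) x = x;
  sgact_comp : forall m n p (f : Dmor m n) (g : Dmor n p) (x : sgob p),
      sgact (dcomp g f) x = sgact f (sgact g x);
  sgact_mul : forall m n (f : Dmor m n) (x y : sgob n),
      sgact f (x * y)%g = (sgact f x * sgact f y)%g }.

Definition sGroup_sSet (G : sGroup) : sSet :=
  @SSet (fun n => (sgob G n : Type)) (@sgact G) (@sgact_id G) (@sgact_comp G).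

(* Polyhedra: finite simplicial complexes (simplices = nonempty finite *)
(* vertex sets, closed under nonempty faces) with a linear order on    *)
(* the vertices of each simplex (compatibility with faces is automatic *)
(* since the orders are restrictions of one relation [pord]).          *)
Record polyhedron (V : finType) := Polyhedron {
  psimp : {set {set V}};
  pord : rel V;
  psimp_ne : set0 \notin psimp;
  psimp_face : forall s t : {set V}, s \in psimp -> t \subset s -> t != set0 -> t \in psimp;
  pord_refl : forall s, s \in psimp -> forall u, u \in s -> pord u u;
  pord_anti : forall s, s \in psimp -> forall u v, u \in s -> v \in s ->
      pord u v -> pord v u -> u = v;
  pord_trans : forall s, s \in psimp -> forall u v w, u \in s -> v \in s -> w \in s ->
      pord u v -> pord v w -> pord u w;
  pord_total : forall s, s \in psimp -> forall u v, u \in s -> v \in s ->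
      pord u v || pord v u }.

Section Hat.
Variables (V : finType) (le : rel V).

(* n-simplices of the simplicial set  \hat K  of the ordered complex    *)
(* with simplex set S: order-preserving maps [n] -> vertices whose      *)
(* image is a simplex (degenerate ones included).                       *)
Definition hat_ok (S : {set {set V}}) n (x : {ffun 'I_n.+1 -> V}) : bool :=
  [forall i : 'I_n.+1, forall j : 'I_n.+1, (i <= j)%N ==> le (x i) (x j)] && ([set x i | i : 'I_n.+1] \in S).

Definition hatS (S : {set {set V}}) n := {x : {ffun 'I_n.+1 -> V} | hat_ok S x}.

(* E(K): simplicial maps \hat K -> E (naturality w.r.t. all simplicial *)
(* operators; the operator t^* on \hat K is precomposition with t).    *)
Record smap (S : {set {set V}}) (E : sSet) := SMap {
  smf : forall n, hatS S n -> E n;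
  smnat : forall m n (t : Dmor m n) (x : hatS S n) (x' : hatS S m),
      val x' = [ffun i => val x (val t i)] -> smf x' = sact t (smf x) }.

Lemma hat_ok_sub (S S' : {set {set V}}) n (x : {ffun 'I_n.+1 -> V}) :
  S \subset S' -> hat_ok S x -> hat_ok S' x.
Proof. by move=> hS /andP[h1 h2]; rewrite /hat_ok h1 (subsetP hS _ h2). Qed.

Definition hat_incl (S S' : {set {set V}}) (hS : S \subset S') n (x : hatS S n) :
  hatS S' n := @exist {ffun 'I_n.+1 -> V} _ (val x) (hat_ok_sub hS (valP x)).

Lemma restr_nat (S S' : {set {set V}}) (hS : S \subset S') (E : sSet) (v : smap S' E) :
  forall m n (t : Dmor m n) (x : hatS S n) (x' : hatS S m),
    val x' = [ffun i => val x (val t i)] ->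
    smf v (hat_incl hS x') = sact t (smf v (hat_incl hS x)).
Proof. by move=> m n t x x' e; apply: smnat. Qed.

Definition restr (S S' : {set {set V}}) (hS : S \subset S') (E : sSet) (v : smap S' E) :
  smap S E := SMap (restr_nat hS v).

Lemma smul_nat (S : {set {set V}}) (G : sGroup) (a b : smap S (sGroup_sSet G)) :
  forall m n (t : Dmor m n) (x : hatS S n) (x' : hatS S m),
    val x' = [ffun i => val x (val t i)] ->
    ((smf a x' : sgob G m) * smf b x')%g
    = sgact t ((smf a x : sgob G n) * smf b x)%g.
Proof. by move=> m n t x x' e; rewrite sgact_mul (smnat a e) (smnat b e). Qed.

Definition smul (S : {set {set V}}) (G : sGroup) (a b : smap S (sGroup_sSet G)) :
  smap S (sGroup_sSet G) := @SMap S (sGroup_sSet G) _ (smul_nat a b).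

End Hat.

Section Poly.
Variables (V : finType) (L : polyhedron V).

Definition bar (y : {set V}) : {set {set V}} := [set t : {set V} | (t \subset y) && (t != set0)].

Lemma bar_sub y : y \in psimp L -> bar y \subset psimp L.
Proof.
move=> hy; apply/subsetP => t; rewrite inE => /andP[hty htn].
exact: psimp_face hy hty htn.
Qed.

Definition EL (E : sSet) := smap (pord L) (psimp L) E.
Definition Ebar (E : sSet) (y : {set V}) := smap (pord L) (bar y) E.

Definition ET (E : sSet) (T : {set {set V}}) :=
  forall y : {y : {set V} | y \in T}, Ebar E (val y).

Definition restrT (E : sSet) (T : {set {set V}}) (hT : T \subset psimp L) (v : EL E) :
  ET E T := fun y => restr (bar_sub (subsetP hT _ (valP y))) v.

End Poly.

Definition FZ (X : Type) := {freeg {classic X} / int}.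

Definition pushZ (X Y : Type) (f : X -> Y) (a : FZ X) : FZ Y :=
  fglift (fun x : {classic X} => << (f x : {classic Y}) >> : FZ Y) a.

Definition gmul (H : Type) (op : H -> H -> H) (a b : FZ H) : FZ H :=
  fglift (fun x : {classic H} =>
     fglift (fun y : {classic H} => << (op x y : {classic H}) >> : FZ H) b) a.

Inductive zspan (M : zmodType) (P : M -> Prop) : M -> Prop :=
  | zspan0 : zspan P 0%R
  | zspanP x : P x -> zspan P x
  | zspanB x y : zspan P x -> zspan P y -> zspan P (x - y)%R.

(* membership in Delta(H)^s, Delta(H) the augmentation ideal (kernel of *)
(* the augmentation deg : Z[H] -> Z), Delta^0 = ZH,                     *)
(* Delta^{s+1} = Delta^s . Delta (additive span of products)            *)
Fixpoint augpow (H : Type) (op : H -> H -> H) (s : nat) : FZ H -> Prop :=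
  match s with
  | 0 => fun _ => True
  | s'.+1 => zspan (fun c : FZ H => exists a b : FZ H,
                 [/\ augpow op s' a, deg b = 0%R & c = gmul op a b])
  end.

(* N u {oo} as option nat (None = oo), with inf and sup of subsets of N *)
Lemma ex_asbool (P : nat -> Prop) : (exists n, P n) -> exists n, `[< P n >].
Proof. by case=> n hn; exists n; apply/asboolP. Qed.

Definition einf (P : nat -> Prop) : option nat :=
  match pselect (exists n, P n) with
  | left h => Some (ex_minn (ex_asbool h))
  | right _ => None
  end.

Definition esup (P : nat -> Prop) : option nat :=
  match pselect (exists m, forall s, P s -> s <= m) with
  | left h => Some (ex_minn (ex_asbool h))
  | right _ => None
  end.

Definition ele (a b : option nat) : bool :=
  match a, b with
  | _, None => true
  | None, Some _ => false
  | Some x, Some y => x <= y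
  end.

Section ThetaEta.
Variables (V : finType) (L : polyhedron V).

Definition theta_inv (E : sSet) (v : FZ (EL L E)) : option nat :=
  einf (fun k => exists (T : {set {set V}}) (hT : T \subset psimp L),
          #|T| = k /\ pushZ (restrT hT) v <> 0%R).

Definition GL (G : sGroup) := ET L (sGroup_sSet G) (psimp L).
Definition GLmul (G : sGroup) (a b : GL G) : GL G := fun y => smul (a y) (b y).

Definition eta_inv (G : sGroup) (v : FZ (EL L (sGroup_sSet G))) : option nat :=
  esup (fun s => augpow (@GLmul G) s (pushZ (restrT (subxx (psimp L))) v)).

End ThetaEta.

From HB Require Import structures.
From mathcomp Require Import all_boot ssralg ssrint monoid.
From mathcomp Require Import boolp.
From mathcomp.multinomials Require Import freeg.

(* For g in G_L let g_y be g on the simplex y and 1 elsewhere, so that g is the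
   product of the commuting g_y.  Expanding g = prod_y (1 + (g_y - 1)) in the
   group ring writes g as a sum over sets S of simplices of the products
   prod_{y in S} (g_y - 1).  A term with #|S| >= k lies in Delta(G_L)^k; a term
   with #|S| < k only depends on g||_S, so applied additively to V||_L it
   factors through V||_S, which vanishes when k <= theta(V).  Hence V||_L lies
   in Delta(G_L)^k for every k <= theta(V). *)

Set Implicit Arguments.
Unset Strict Implicit.
Unset Printing Implicit Defensive.
Import GRing.Theory.
Local Open Scope ring_scope.

HB.instance Definition _ (K : choiceType) (M : lmodType int) (f : K -> M) :=
  GRing.isZmodMorphism.Build _ _ (fglift f) (lift_is_additive f).

Definition basisZ (X : Type) (x : X) : FZ X := << (x : {classic X}) >>.

Section FreeAbelianGroup.
Variables (K : choiceType) (M : lmodType int).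

Lemma fgliftE (f : K -> M) (D : {freeg K / int}) :
  fglift f D = \sum_(z <- dom D) coeff z D *: f z.
Proof.
by rewrite -{1}(freeg_sumE D) raddf_sum; apply: eq_bigr => z _; apply: liftU.
Qed.

Lemma eq_fglift (f g : K -> M) D : f =1 g -> fglift f D = fglift g D.
Proof. by move=> efg; rewrite !fgliftE; apply: eq_bigr => z _; rewrite efg. Qed.

Lemma fglift_sum (J : Type) (r : seq J) (F : J -> K -> M) D :
  fglift (fun x => \sum_(j <- r) F j x) D = \sum_(j <- r) fglift (F j) D.
Proof.
rewrite fgliftE; under eq_bigr do rewrite scaler_sumr.
by rewrite exchange_big; apply: eq_bigr => j _; rewrite fgliftE.
Qed.

Lemma fgliftBf (f g : K -> M) D :
  fglift (fun x => f x - g x) D = fglift f D - fglift g D.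
Proof. by rewrite !fgliftE -sumrB; apply: eq_bigr => z _; apply: scalerBr. Qed.

End FreeAbelianGroup.

Lemma fglift_basisZ (X : Type) (M : lmodType int) (f : {classic X} -> M) (x : X) :
  fglift f (basisZ x) = f x.
Proof. by rewrite /basisZ liftU scale1r. Qed.

Lemma fglift_basisZ_id (X : Type) (D : FZ X) :
  fglift (fun x : {classic X} => basisZ x) D = D.
Proof.
rewrite fgliftE -[RHS]freeg_sumE; apply: eq_bigr => z _.
by rewrite /basisZ -[coeff _ _]intz scaler_int freegU_mulz.
Qed.

Lemma fglift_pushZ (X Y : Type) (M : lmodType int) (f : {classic Y} -> M)
    (e : X -> Y) D :
  fglift f (pushZ e D) = fglift (fun x : {classic X} => f (e x)) D.
Proof.
rewrite /pushZ [in LHS](fgliftE _ D) raddf_sum fgliftE; apply: eq_bigr => z _.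
by rewrite -[coeff z D]intz !scaler_int raddfMz /= liftU scale1r.
Qed.

Lemma pushZ_comp (X Y Z : Type) (f : Y -> Z) (g : X -> Y) D :
  pushZ f (pushZ g D) = pushZ (fun x => f (g x)) D.
Proof. exact: (fglift_pushZ (fun y => basisZ (f y)) g D). Qed.

Lemma eq_pushZ (X Y : Type) (f g : X -> Y) D : f =1 g -> pushZ f D = pushZ g D.
Proof. by move=> efg; apply: eq_fglift => x; rewrite /= efg. Qed.

Section GroupRing.
Variables (H : Type) (op : H -> H -> H).

Lemma gmulU (x y : H) : gmul op (basisZ x) (basisZ y) = basisZ (op x y).
Proof. by rewrite /gmul !fglift_basisZ. Qed.

Lemma gmulBl a b c : gmul op (a - b) c = gmul op a c - gmul op b c.
Proof. exact: raddfB. Qed.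

Lemma gmulBr a b c : gmul op a (b - c) = gmul op a b - gmul op a c.
Proof. by rewrite /gmul -fgliftBf; apply: eq_fglift => x; rewrite raddfB. Qed.

Lemma zspan_sub (P Q : FZ H -> Prop) x :
  (forall y, P y -> Q y) -> zspan P x -> zspan Q x.
Proof. by move=> hPQ; elim=> [|y /hPQ|y z _ hy _ hz]; constructor. Qed.

Lemma augpow0 s : augpow op s 0.
Proof. by case: s => //= s; apply: zspan0. Qed.

Lemma augpowB s a b : augpow op s a -> augpow op s b -> augpow op s (a - b).
Proof. by case: s => //= s; apply: zspanB. Qed.

Lemma augpowD s a b : augpow op s a -> augpow op s b -> augpow op s (a + b).
Proof.
by move=> ha hb; have := augpowB ha (augpowB (augpow0 s) hb); rewrite sub0r opprK.
Qed.

Lemma augpowMn s a n : augpow op s a -> augpow op s (a *+ n).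
Proof.
move=> ha; elim: n => [|n IHn]; first by rewrite mulr0n; apply: augpow0.
by rewrite mulrS; apply: augpowD.
Qed.

Lemma augpowZ s (c : int) a : augpow op s a -> augpow op s (c *: a).
Proof.
move=> ha; rewrite -[c]intz scaler_int; case: c => n; first exact: augpowMn.
by rewrite NegzE mulrNz -sub0r; apply: augpowB (augpow0 _) (augpowMn _ ha).
Qed.

Lemma augpow_fglift s (K : choiceType) (F : K -> FZ H) D :
  (forall x, augpow op s (F x)) -> augpow op s (fglift F D).
Proof.
move=> hF; rewrite fgliftE.
by apply: big_ind => [|a b|z _]; [apply: augpow0|apply: augpowD|apply: augpowZ].
Qed.

Lemma augpowS s x : augpow op s.+1 x -> augpow op s x.
Proof.
elim: s x => [//|s IHs] x /=; apply: zspan_sub => c [a [b [ha hb ->]]].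
by exists a, b; split; first exact: IHs.
Qed.

Lemma augpow_le s t x : (s <= t)%N -> augpow op t x -> augpow op s x.
Proof.
move=> /subnK <-; elim: (t - s)%N => [//|n IHn] /augpowS; exact: IHn.
Qed.

End GroupRing.

Fixpoint subseqs (T : Type) (ys : seq T) : seq (seq T) :=
  if ys is y :: ys' then subseqs ys' ++ map (cons y) (subseqs ys') else [:: [::]].

Lemma mem_subseqs (T : eqType) (ys zs : seq T) :
  zs \in subseqs ys -> {subset zs <= ys}.
Proof.
elim: ys zs => [|y ys IHys] zs /=; first by rewrite inE => /eqP ->.
rewrite mem_cat => /orP[/IHys sub z /sub|/mapP[zs' /IHys sub ->] z].
  by rewrite inE orbC => ->.
by rewrite !inE => /orP[->|/sub ->]; rewrite ?orbT.
Qed.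

Section ProductExpansion.
Variables (H : Type) (A : eqType) (op : H -> H -> H) (e : H).

Definition augstep (a : A -> H) (acc : FZ H) (z : A) : FZ H :=
  gmul op acc (basisZ (a z) - basisZ e).

Lemma foldl_augstepB a zs acc acc' :
  foldl (augstep a) (acc - acc') zs
  = foldl (augstep a) acc zs - foldl (augstep a) acc' zs.
Proof. by elim: zs acc acc' => [//|z zs IHzs] acc acc' /=; rewrite /augstep gmulBl. Qed.

Lemma augpow_foldl_augstep a zs s acc :
  augpow op s acc -> augpow op (s + size zs) (foldl (augstep a) acc zs).
Proof.
elim: zs s acc => [|z zs IHzs] s acc hacc /=; first by rewrite addn0.
rewrite addnS -addSn; apply: IHzs; apply: zspanP.
by exists acc, (basisZ (a z) - basisZ e); rewrite /basisZ degB !degU subrr.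
Qed.

Lemma eq_in_foldl_augstep a b zs acc :
  {in zs, a =1 b} -> foldl (augstep a) acc zs = foldl (augstep b) acc zs.
Proof.
elim: zs acc => [//|z zs IHzs] acc /= ab.
by rewrite /augstep ab ?mem_head // IHzs // => y hy; rewrite ab // inE hy orbT.
Qed.

Hypotheses (opA : associative op) (op_e : right_id e op).

Lemma sum_subseqs_augstep a ys h :
  \sum_(zs <- subseqs ys) foldl (augstep a) (basisZ h) zs
  = basisZ (op h (\big[op/e]_(y <- ys) a y)).
Proof.
elim: ys h => [|y ys IHys] h /=; first by rewrite big_seq1 big_nil op_e.
have step : augstep a (basisZ h) y = basisZ (op h (a y)) - basisZ h.
  by rewrite /augstep gmulBr !gmulU op_e.
rewrite big_cat big_map /= step.
under [X in _ + X]eq_bigr do rewrite foldl_augstepB.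
by rewrite sumrB !IHys addrC subrK big_cons opA.
Qed.

End ProductExpansion.

Lemma ele_einf_esup (P Q : nat -> Prop) :
  (forall k, (forall n, (n < k)%N -> ~ P n) -> Q k) -> ele (einf P) (esup Q).
Proof.
move=> hPQ; rewrite /einf /esup.
case: pselect => [hP|noP]; case: pselect => [[m hm]|_] //=.
- case: ex_minnP => k _ kmin; case: ex_minnP => m' /asboolP hm' _.
  apply: hm'; apply: hPQ => n ltnk Pn.
  by move: (kmin n (asboolT Pn)); rewrite leqNgt ltnk.
- have /hm : Q m.+1 by apply: hPQ => n _ Pn; apply: noP; exists n.
  by rewrite ltnn.
Qed.

Section Polyhedron.
Variables (V : finType) (L : polyhedron V) (G : sGroup).
Local Notation E := (sGroup_sSet G).
Local Notation GLm := (@GLmul V L G).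

Lemma sgact1 m n (t : Dmor m n) : sgact t (1 : sgob G n)%g = 1%g.
Proof.
have := @sgact_mul G _ _ t 1%g 1%g; rewrite mulg1 => h.
by apply: (@mulgI _ (sgact t 1%g)); rewrite -h mulg1.
Qed.

Definition smap1 (S : {set {set V}}) : smap (pord L) S E :=
  @SMap _ _ S E (fun n _ => 1%g) (fun m n t x x' _ => esym (sgact1 t)).

Lemma smap_eq S (a b : smap (pord L) S E) :
  (forall n (x : hatS (pord L) S n), smf a x = smf b x) -> a = b.
Proof.
case: a => fa na; case: b => fb nb /= eab.
have efab : fa = fb.
  apply: functional_extensionality_dep => n.
  by apply: functional_extensionality_dep => x; apply: eab.
by subst fb; congr SMap; apply: Prop_irrelevance.
Qed.

Definition GLone : GL L G := fun y => smap1 (bar (val y)).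

Lemma GLmul1g : left_id GLone GLm.
Proof.
move=> h; apply: functional_extensionality_dep => y.
by apply: smap_eq => n x /=; rewrite mul1g.
Qed.

Lemma GLmulg1 : right_id GLone GLm.
Proof.
move=> h; apply: functional_extensionality_dep => y.
by apply: smap_eq => n x /=; rewrite mulg1.
Qed.

Lemma GLmulA : associative GLm.
Proof.
move=> a b c; apply: functional_extensionality_dep => y.
by apply: smap_eq => n x /=; rewrite mulgA.
Qed.

Definition GLproj (T : {set {set V}}) (g : GL L G) : GL L G :=
  fun y => if val y \in T then g y else GLone y.

Lemma GLproj_set1_proj (T : {set {set V}}) y g :
  y \in T -> GLproj [set y] (GLproj T g) = GLproj [set y] g.
Proof.
move=> yT; apply: functional_extensionality_dep => c; rewrite /GLproj inE.
by case: eqP => // cy; rewrite ifT // cy.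
Qed.

Lemma big_GLproj_set1 g (ys : seq {set V}) : uniq ys ->
  \big[GLm/GLone]_(y <- ys) GLproj [set y] g = GLproj [set z in ys] g.
Proof.
elim: ys => [|y ys IHys] /=.
  move=> _; rewrite big_nil.
  by apply: functional_extensionality_dep => c; rewrite /GLproj inE.
case/andP=> yys /IHys; rewrite big_cons => ->.
apply: functional_extensionality_dep => c; rewrite /GLproj /GLmul !inE.
case: eqP => [cy|_] /=.
  by rewrite ifN ?cy //; apply: smap_eq => n x /=; rewrite mulg1.
by case: (val c \in ys); apply: smap_eq => n x /=; rewrite mul1g.
Qed.

Lemma GLproj_simplices g : GLproj (psimp L) g = g.
Proof. by apply: functional_extensionality_dep => c; rewrite /GLproj (valP c). Qed.

(* The element of G_L equal to h on T and to 1 elsewhere; [b] abstracts the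
   test [val y \in T] so that its proof can be passed to [h]. *)
Definition extend1_at (T : {set {set V}}) (h : ET L E T)
    (y : {y : {set V} | y \in psimp L}) (b : bool) (e : (val y \in T) = b) :
  Ebar L E (val y) :=
  (if b return ((val y \in T) = b -> Ebar L E (val y))
   then fun yT => h (exist (fun y => y \in T) (val y) yT) else fun _ => GLone y) e.

Definition extend1 T (h : ET L E T) : GL L G :=
  fun y => extend1_at h (erefl (val y \in T)).

Lemma GLproj_restrT (T : {set {set V}}) (hT : T \subset psimp L) (u : EL L E) :
  GLproj T (restrT (subxx (psimp L)) u) = extend1 (restrT hT u).
Proof.
apply: functional_extensionality_dep => y; rewrite /extend1.
suff : forall b (e : (val y \in T) = b),
    GLproj T (restrT (subxx (psimp L)) u) y = extend1_at (restrT hT u) e by apply.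
case=> e; rewrite /GLproj /extend1_at e //= /restrT.
set p1 := bar_sub _; set p2 := bar_sub _; by rewrite (bool_irrelevance p1 p2).
Qed.

Lemma pushZ_GLproj_restrT (T : {set {set V}}) (hT : T \subset psimp L)
    (v : FZ (EL L E)) :
  pushZ (restrT hT) v = 0 ->
  pushZ (GLproj T) (pushZ (restrT (subxx (psimp L))) v) = 0.
Proof.
move=> v0; rewrite pushZ_comp (eq_pushZ _ (GLproj_restrT hT)) -pushZ_comp v0.
exact: raddf0.
Qed.

Definition expansion_term (zs : seq {set V}) (g : GL L G) : FZ (GL L G) :=
  foldl (augstep GLm GLone (fun y => GLproj [set y] g)) (basisZ GLone) zs.

Lemma basisZ_expansion g :
  basisZ g = \sum_(zs <- subseqs (enum (psimp L))) expansion_term zs g.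
Proof.
rewrite sum_subseqs_augstep; [|exact: GLmulA|exact: GLmulg1].
by rewrite big_GLproj_set1 ?enum_uniq // set_enum GLproj_simplices GLmul1g.
Qed.

Lemma augpow_expansion_term k zs g :
  (k <= size zs)%N -> augpow GLm k (expansion_term zs g).
Proof.
move=> kzs; apply: augpow_le kzs _.
by rewrite -[size zs]add0n; apply: augpow_foldl_augstep.
Qed.

Lemma expansion_term_GLproj (T : {set {set V}}) zs g :
  {subset zs <= T} -> expansion_term zs (GLproj T g) = expansion_term zs g.
Proof. by move=> zsT; apply: eq_in_foldl_augstep => y /zsT /GLproj_set1_proj. Qed.

Lemma augpow_restrT (v : FZ (EL L E)) k :
  (forall (T : {set {set V}}) (hT : T \subset psimp L), (#|T| < k)%N ->
     pushZ (restrT hT) v = 0) ->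
  augpow GLm k (pushZ (restrT (subxx (psimp L))) v).
Proof.
move=> vT0; set x := pushZ _ v.
rewrite -[x]fglift_basisZ_id.
rewrite (eq_fglift _ (fun g : {classic GL L G} => basisZ_expansion g)).
rewrite fglift_sum big_seq.
apply: big_ind => [|a b|zs]; [exact: augpow0|exact: augpowD|].
move=> /mem_subseqs zsL; have [kzs|zsk] := leqP k (size zs).
  by apply: augpow_fglift => g; apply: augpow_expansion_term.
have zsT : {subset zs <= [set z in zs]} by move=> z; rewrite inE.
have TL : [set z in zs] \subset psimp L.
  by apply/subsetP => z; rewrite inE => /zsL; rewrite mem_enum.
have Tk : (#|[set z in zs]| < k)%N.
  by rewrite cardsE (leq_ltn_trans (card_size zs)).
rewrite -(eq_fglift _ (fun g : {classic GL L G} => expansion_term_GLproj g zsT)).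
by rewrite -fglift_pushZ (pushZ_GLproj_restrT (vT0 _ TL Tk)) raddf0; apply: augpow0.
Qed.

End Polyhedron.

Theorem mainTheorem6 (V : finType) (L : polyhedron V) (G : sGroup)
  (v : FZ (EL L (sGroup_sSet G))) :
  ele (theta_inv v) (eta_inv v).
Proof.
apply: ele_einf_esup => k no_small; apply: augpow_restrT => T hT Tk.
by apply: contra_notP (no_small _ Tk) => vT; exists T, hT.
Qed.
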